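(* Let $$P=\begin{bmatrix} x_1 & x_2 & x_3 & x_4 & x_5 & x_6 & x_7 & x_8\\ 3x_1-x_2 & -x_1 & 3x_3-x_4 & -x_3 & 3x_5-x_6 & -x_5 & 3x_7-x_8 & -x_7\\ 3x_3 & 3x_4 & x_1 & x_2 & 3x_7 & 3x_8 & x_5 & x_6\\ 9x_3-3x_4 & -3x_3 & 3x_1-x_2 & -x_1 & 9x_7-3x_8 & -3x_7 & 3x_5-x_6 & -x_5\\ 14x_5 & 14x_6 & 14x_7 & 14x_8 & x_1 & x_2 & x_3 & x_4\\ 42x_5-14x_6 & -14x_5 & 42x_7-14x_8 & -14x_7 & 3x_1-x_2 & -x_1 & 3x_3-x_4 & -x_3\\ 42x_7 & 42x_8 & 14x_5 & 14x_6 & 3x_3 & 3x_4 & x_1 & x_2\\ 126x_7-42x_8 & -42x_7 & 42x_5-14x_6 & -14x_5 & 9x_3-3x_4 & -3x_3 & 3x_1-x_2 & -x_1\end{bmatrix}.$$ Then the octic diophantine equation $\det P=1$ in the unknowns $x_1,\dots,x_8$ has infinitely many solutions in positive integers (one of them being $(2,6,1,3,7,21,4,12)$). *)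

From mathcomp Require Import all_boot all_order all_algebra.
Set Implicit Arguments. Unset Strict Implicit. Unset Printing Implicit Defensive.
Import Order.TTheory GRing.Theory Num.Theory.
Local Open Scope ring_scope.

Definition P_rows (x1 x2 x3 x4 x5 x6 x7 x8 : int) : seq (seq int) :=
  [:: [:: x1; x2; x3; x4; x5; x6; x7; x8];
      [:: 3*x1-x2; -x1; 3*x3-x4; -x3; 3*x5-x6; -x5; 3*x7-x8; -x7];
      [:: 3*x3; 3*x4; x1; x2; 3*x7; 3*x8; x5; x6];
      [:: 9*x3-3*x4; -(3*x3); 3*x1-x2; -x1; 9*x7-3*x8; -(3*x7); 3*x5-x6; -x5];
      [:: 14*x5; 14*x6; 14*x7; 14*x8; x1; x2; x3; x4];
      [:: 42*x5-14*x6; -(14*x5); 42*x7-14*x8; -(14*x7); 3*x1-x2; -x1; 3*x3-x4; -x3];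
      [:: 42*x7; 42*x8; 14*x5; 14*x6; 3*x3; 3*x4; x1; x2];
      [:: 126*x7-42*x8; -(42*x7); 42*x5-14*x6; -(14*x5); 9*x3-3*x4; -(3*x3); 3*x1-x2; -x1]].

(* x : 8.-tuple int stands for (x_1,...,x_8), with x_{k+1} = tnth x k. *)
Definition Pmx (x : 8.-tuple int) : 'M[int]_8 :=
  let r := P_rows (tnth x (inord 0)) (tnth x (inord 1)) (tnth x (inord 2))
                  (tnth x (inord 3)) (tnth x (inord 4)) (tnth x (inord 5))
                  (tnth x (inord 6)) (tnth x (inord 7)) in
  \matrix_(i < 8, j < 8) nth 0 (nth [::] r i) j.

Definition pos_solution (x : 8.-tuple int) : Prop :=
  (forall k : 'I_8, 0 < tnth x k) /\ \det (Pmx x) = 1.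

(* Write P(x) for the 8x8 matrix of the statement and E := P(e1), the
   block-diagonal involution with diagonal blocks [[1, 0], [3, -1]].  For the
   fixed vector u = (2,6,1,3,7,21,4,12) the matrix P satisfies the twisted
   multiplicativity law  P(step x) = P(u) E P(x),  where step is an explicit
   linear map with nonnegative integer coefficients (multiplication by u in
   the underlying algebra).  Since det E = det P(u) = 1, step maps solutions
   of det P = 1 to solutions; it preserves positivity and strictly increases
   the first coordinate, so the iterates of step from the solution u have
   unbounded first coordinate, and no finite list contains all solutions.

   The determinants are obtained by evaluating a cofactor expansion.  This is
   feasible for E over int, but not for P(u), whose entries are too large for
   the unary integers of the library; instead, step v = e1 for an explicit
   integer vector v, so det P(u) * det P(v) = 1 forces det P(u) = +-1, and the
   sign is read off from a computation of det P(u) in F_3. *)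

From mathcomp Require Import all_boot all_order all_algebra.
From mathcomp Require Import zify ring.
Import Order.TTheory GRing.Theory Num.Theory.
Local Open Scope ring_scope.

(* Cofactor expansion along the first row of the n x n array f.  Unlike
   \det it is a structural recursion, hence evaluable by computation. *)
Fixpoint laplace_det {R : pzRingType} (n : nat) (f : nat -> nat -> R) : R :=
  match n with
  | 0 => 1
  | n'.+1 => foldr (fun j acc => (-1) ^+ j * f 0%N j *
                      laplace_det n' (fun i k => f i.+1 (bump j k)) + acc)
                   0 (iota 0 n)
  end.

Lemma laplace_detS {R : pzRingType} n (f : nat -> nat -> R) :
  laplace_det n.+1 f = \sum_(j < n.+1) (-1) ^+ j * f 0%N j *
                         laplace_det n (fun i k => f i.+1 (bump j k)).
Proof.
pose F j := (-1) ^+ j * f 0%N j * laplace_det n (fun i k => f i.+1 (bump j k)).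
have -> : laplace_det n.+1 f = foldr (fun j acc => F j + acc) 0 (iota 0 n.+1).
  by [].
by rewrite -foldr_map foldrE big_map -(big_mkord xpredT F) /index_iota subn0.
Qed.

Lemma det_laplace {R : comPzRingType} n (A : 'M[R]_n) (f : nat -> nat -> R) :
  (forall i j : 'I_n, A i j = f i j) -> \det A = laplace_det n f.
Proof.
elim: n A f => [|n IH] A f Af; first by rewrite det_mx00.
rewrite (expand_det_row A ord0) laplace_detS; apply: eq_bigr => j _.
rewrite /cofactor (IH _ (fun i k => f i.+1 (bump j k))); last first.
  by move=> i k; rewrite !mxE Af.
by rewrite add0n mulrA [A _ _ * _]mulrC Af.
Qed.

Definition entry {R : pzRingType} (L : seq (seq R)) (i j : nat) : R :=
  nth 0 (nth [::] L i) j.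

(* A map fixing 0 commutes with reading entries; used to reduce an integer
   matrix modulo 3 before evaluating its determinant. *)
Lemma entry_map {R S : pzRingType} (g : R -> S) L i j : g 0 = 0 ->
  g (entry L i j) = entry (map (map g) L) i j.
Proof.
move=> g0; rewrite /entry.
elim: L i => [|r L IH] [|i] /=; rewrite ?nth_nil //.
by elim: r {IH} j => [|y r IHr] [|j] /=; rewrite ?nth_nil.
Qed.

Definition Pmat (a b c d e f g h : int) : 'M[int]_8 :=
  \matrix_(i < 8, j < 8) entry (P_rows a b c d e f g h) i j.

Definition coord (x : 8.-tuple int) (k : nat) : int := tnth x (inord k).

Lemma Pmx_coord (x : 8.-tuple int) : Pmx x =
  Pmat (coord x 0) (coord x 1) (coord x 2) (coord x 3)
       (coord x 4) (coord x 5) (coord x 6) (coord x 7).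
Proof. by []. Qed.

Definition tuple8 (a b c d e f g h : int) : 8.-tuple int :=
  [tuple of [:: a; b; c; d; e; f; g; h]].

Lemma coord_tuple8 a b c d e f g h k : (k < 8)%N ->
  coord (tuple8 a b c d e f g h) k = nth 0 [:: a; b; c; d; e; f; g; h] k.
Proof. by move=> lt_k8; rewrite /coord (tnth_nth 0) inordK. Qed.

Lemma Pmx_tuple8 a b c d e f g h :
  Pmx (tuple8 a b c d e f g h) = Pmat a b c d e f g h.
Proof. by rewrite Pmx_coord !coord_tuple8. Qed.

Lemma det_Pmat a b c d e f g h :
  \det (Pmat a b c d e f g h) = laplace_det 8 (entry (P_rows a b c d e f g h)).
Proof. by apply: det_laplace => i j; rewrite mxE. Qed.

Definition E : 'M[int]_8 := Pmat 1 0 0 0 0 0 0 0.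
Definition Pu : 'M[int]_8 := Pmat 2 6 1 3 7 21 4 12.

(* Multiplication by u: the linear map with P(step x) = P(u) E P(x). *)
Definition step (a b c d e f g h : int) : 8.-tuple int := tuple8
 (2*a + 6*b + 3*c + 9*d + 98*e + 294*f + 168*g + 504*h)
 (6*a + 20*b + 9*c + 30*d + 294*e + 980*f + 504*g + 1680*h)
 (a + 3*b + 2*c + 6*d + 56*e + 168*f + 98*g + 294*h)
 (3*a + 10*b + 6*c + 20*d + 168*e + 560*f + 294*g + 980*h)
 (7*a + 21*b + 12*c + 36*d + 2*e + 6*f + 3*g + 9*h)
 (21*a + 70*b + 36*c + 120*d + 6*e + 20*f + 9*g + 30*h)
 (4*a + 12*b + 7*c + 21*d + e + 3*f + 2*g + 6*h)
 (12*a + 40*b + 21*c + 70*d + 3*e + 10*f + 6*g + 20*h).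

Lemma Pmx_step a b c d e f g h :
  Pmx (step a b c d e f g h) = Pu *m E *m Pmat a b c d e f g h.
Proof.
rewrite Pmx_tuple8; apply/matrixP => i j.
rewrite !mxE !big_ord_recl big_ord0 !mxE !big_ord_recl !big_ord0 !mxE.
by case: i => [[|[|[|[|[|[|[|[|//]]]]]]]] ?];
   case: j => [[|[|[|[|[|[|[|[|//]]]]]]]] ?]; rewrite /entry /=; ring.
Qed.

(* E is block diagonal with four blocks of determinant -1. *)
Lemma det_E : \det E = 1.
Proof. by rewrite det_Pmat; vm_compute. Qed.

Lemma det_Pu_mod3 : (\det Pu)%:~R = 1 :> 'F_3.
Proof.
rewrite -(det_map_mx (intr : {rmorphism int -> 'F_3})).
rewrite (@det_laplace _ _ _ (entry (map (map intr) (P_rows 2 6 1 3 7 21 4 12)))).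
  by apply/eqP; vm_compute.
by move=> i j; rewrite !mxE entry_map.
Qed.

Lemma int_unit_mod3 {d e : int} : d * e = 1 -> d%:~R = 1 :> 'F_3 -> d = 1.
Proof.
move=> de1; have /unitrPr/orP[/eqP-> //|/eqP->] : exists e, d * e = 1 by exists e.
by move/eqP; vm_compute.
Qed.

(* step v = e1 for v = (-3620,1086,2090,-627,970,-291,-560,168), so
   E = P(u) E P(v), making det P(u) a unit of int. *)
Lemma det_Pu : \det Pu = 1.
Proof.
have E_eq : E = Pu *m E *m Pmat (-3620) 1086 2090 (-627) 970 (-291) (-560) 168.
  rewrite -Pmx_step -[E]Pmx_tuple8; congr Pmx; rewrite /step; congr tuple8; lia.
have := congr1 determinant E_eq; rewrite !det_mulmx det_E mulr1 => /esym de1.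
exact: int_unit_mod3 de1 det_Pu_mod3.
Qed.

Lemma det_step a b c d e f g h :
  \det (Pmx (step a b c d e f g h)) = \det (Pmat a b c d e f g h).
Proof. by rewrite Pmx_step !det_mulmx det_Pu det_E !mul1r. Qed.

Definition next (x : 8.-tuple int) : 8.-tuple int :=
  step (coord x 0) (coord x 1) (coord x 2) (coord x 3)
       (coord x 4) (coord x 5) (coord x 6) (coord x 7).

(* step has nonnegative coefficients and coefficient 2 on x1 in its first
   coordinate: it preserves positivity and increases x1. *)
Lemma next_pos {x : 8.-tuple int} : (forall k : 'I_8, 0 < tnth x k) ->
  (forall k : 'I_8, 0 < tnth (next x) k) /\ coord x 0 < coord (next x) 0.
Proof.
move=> pos_x; have p k : 0 < coord x k := pos_x (inord k).
have := (p 0%N, p 1%N, p 2%N, p 3%N, p 4%N, p 5%N, p 6%N, p 7%N).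
case=> [[[[[[[p0 p1] p2] p3] p4] p5] p6] p7].
rewrite /next /step coord_tuple8 //=; split; last by lia.
by case=> [[|[|[|[|[|[|[|[|//]]]]]]]] ?]; rewrite (tnth_nth 0) /=; lia.
Qed.

Lemma next_solution {x : 8.-tuple int} : pos_solution x ->
  pos_solution (next x) /\ coord x 0 < coord (next x) 0.
Proof.
case=> pos_x det_x; have [pos_next grow] := next_pos pos_x.
by split=> //; split=> //; rewrite det_step -Pmx_coord.
Qed.

Lemma seed_solution : pos_solution (tuple8 2 6 1 3 7 21 4 12).
Proof.
split; first by case=> [[|[|[|[|[|[|[|[|//]]]]]]]] ?].
by rewrite Pmx_tuple8 det_Pu.
Qed.

Lemma unbounded_solutions (n : nat) :
  exists x : 8.-tuple int, pos_solution x /\ n%:Z <= coord x 0.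
Proof.
elim: n => [|n [x [sol_x le_n_x]]].
  exists (tuple8 2 6 1 3 7 21 4 12); split; first exact: seed_solution.
  by rewrite coord_tuple8.
have [sol_next grow] := next_solution sol_x.
by exists (next x); split=> //; lia.
Qed.

(* A finite list has a bound M on the first coordinates of its members; a
   solution with x1 > M is not in the list. *)
Theorem mainTheorem15 :
  pos_solution [tuple of [:: 2; 6; 1; 3; 7; 21; 4; 12]] /\
  (forall s : seq (8.-tuple int), exists x : 8.-tuple int,
      pos_solution x /\ x \notin s).
Proof.
split; first exact: seed_solution.
move=> s; pose M := \max_(y <- s) `|coord y 0|%N.
have [x [sol_x big_x]] := unbounded_solutions M.+1.
exists x; split=> //; apply/negP => x_in_s.
have le_x_M : (`|coord x 0| <= M)%N := leq_bigmax_seq x x_in_s isT.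
lia.
Qed.
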